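(* Let $G$ be a finite multigraph (no loops), let $\ell \geq 4$ be an integer, let $s$ be a vertex of $G$, and let $A \subsetneq V(G)$ with $s \notin A$ be such that $\lambda_G(x,y) \geq \ell$ for any two distinct $x,y\in A$ and such that no edge of $G$ has both endvertices outside $A$. If $\deg(s) = 4$, then $L(G,s,\tau_A)$ is one of: $K_4$, $K_{2,2}$, or the disjoint union of two edges. The last case can hold only if $\ell$ is odd.
   Context: $\lambda_G(x,y)$ is the maximum number of pairwise edge-disjoint $x$–$y$ paths in $G$. Lifting two distinct edges $sx,sy$ means deleting them and adding a new edge $xy$. The target function $\tau_A$ assigns $\ell$ to pairs of vertices both in $A$ and $0$ otherwise; a pair of edges at $s$ is $\tau_A$-admissible if after lifting them the new graph $G'$ satisfies $\lambda_{G'}(x,y)\ge\tau_A(x,y)$ for all distinct $x,y\in V(G)\setminus\{s\}$. The lifting graph $L(G,s,\tau_A)$ has as vertices the edges incident with $s$, two being adjacent iff they form a $\tau_A$-admissible pair. *)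

(* A finite multigraph on a finite vertex type V is a list
   of edges G : seq (V * V); edge number i is nth G i, so parallel edges are
   distinct list entries. *)
From mathcomp Require Import all_boot.
Set Implicit Arguments. Unset Strict Implicit. Unset Printing Implicit Defensive.

Section Multigraph.
Variable V : finType.
Implicit Types (G : seq (V * V)) (x y s : V).

Definition joins (e : V * V) (u v : V) : bool :=
  ((e.1 == u) && (e.2 == v)) || ((e.2 == u) && (e.1 == v)).

Definition is_path G x y (p : seq nat) : Prop :=
  exists vs : seq V,
    [/\ size vs = (size p).+1, nth x vs 0 = x, last x vs = y, uniq vs &
        forall k, k < size p ->
          nth 0 p k < size G /\
          joins (nth (x, x) G (nth 0 p k)) (nth x vs k) (nth x vs k.+1)].

(* lambda_G(x,y) >= k : there are k pairwise edge-disjoint x--y paths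
   (lambda is the maximum number of such paths). *)
Definition lambda_ge G x y (k : nat) : Prop :=
  exists ps : seq (seq nat),
    [/\ size ps = k,
        forall p, p \in ps -> is_path G x y p &
        forall i j, i < size ps -> j < size ps -> i != j ->
          forall e, e \in nth [::] ps i -> e \notin nth [::] ps j].

Definition tau (A : {set V}) (l : nat) x y : nat :=
  if (x \in A) && (y \in A) then l else 0.

Definition incident s (e : V * V) : bool := (e.1 == s) || (e.2 == s).

Definition other s (e : V * V) : V := if e.1 == s then e.2 else e.1.

Definition deg G s : nat := count (incident s) G.

(* lifting the edges number i and j (both at s): delete them, add x y where
   x, y are their other endvertices *)
Definition liftG G s (i j : nat) : seq (V * V) :=
  [seq q.2 | q <- zip (iota 0 (size G)) G & (q.1 != i) && (q.1 != j)]
  ++ [:: (other s (nth (s, s) G i), other s (nth (s, s) G j))].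

(* vertex set of the lifting graph: edges incident with s *)
Definition lvert G s : {set 'I_(size G)} :=
  [set i : 'I_(size G) | incident s (nth (s, s) G i)].

(* tau_A-admissible pair = adjacency in L(G, s, tau_A) *)
Definition admissible G s (A : {set V}) (l : nat) (i j : 'I_(size G)) : Prop :=
  [/\ i \in lvert G s, j \in lvert G s, i != j &
      forall x y, x != s -> y != s -> x != y ->
        lambda_ge (liftG G s i j) x y (tau A l x y)].
End Multigraph.

Section Shapes.
Variable T : finType.

Definition upair (a b : T) (s : seq (T * T)) : bool :=
  has (fun p => ((a, b) == p) || ((b, a) == p)) s.

Definition is_K4 (I : {set T}) (adj : T -> T -> Prop) : Prop :=
  #|I| = 4 /\ forall a b, a \in I -> b \in I -> (adj a b <-> a != b).

Definition shape4 (I : {set T}) (adj : T -> T -> Prop)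
    (E : T -> T -> T -> T -> seq (T * T)) : Prop :=
  exists e1 e2 e3 e4 : T,
    [/\ uniq [:: e1; e2; e3; e4], I = [set e1; e2; e3; e4] &
        forall a b, a \in I -> b \in I -> (adj a b <-> upair a b (E e1 e2 e3 e4))].

Definition is_K22 I adj : Prop :=
  shape4 I adj (fun e1 e2 e3 e4 => [:: (e1, e2); (e2, e3); (e3, e4); (e4, e1)]).

Definition is_2K2 I adj : Prop :=
  shape4 I adj (fun e1 e2 e3 e4 => [:: (e1, e2); (e3, e4)]).
End Shapes.
Arguments admissible [V] G s A l i j.

(* For X not containing s, lifting the s-edges i and j lowers d(X) by two exactly when
   both of their other ends lie in X.  So by Menger's theorem the pair is tau_A-admissible
   iff there is no dangerous set X: one avoiding s, containing both other ends, splitting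
   A and with d(X) <= l + 1.  Every A-splitting set has d >= l and deg s = 4, so a
   dangerous set receives exactly two s-edges, and the complement of X + s is dangerous
   for the other two: the non-admissible pairs form a union of perfect matchings of the
   four s-edges.  Uncrossing dangerous sets for three pairs sharing an edge gives
   4l <= 3(l + 1), impossible for l >= 4; for two such pairs it forces
   l = 2 e(X ∩ Y, X \ Y) + 1.  Deleting at most two perfect matchings from K4 leaves K4,
   K_{2,2} or 2K2, and the last needs l odd.
   Menger's theorem is proved with integral unit flows: augmenting paths yield a flow or
   a small cut, and a flow decomposes into edge-disjoint paths. *)

From mathcomp Require Import all_boot all_algebra zify.
Set Implicit Arguments. Unset Strict Implicit. Unset Printing Implicit Defensive.
Import GRing.Theory Num.Theory.

Lemma uniq4_eqF (T : eqType) (a b c d : T) : uniq [:: a; b; c; d] ->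
  ((a == b) = false) * ((a == c) = false) * ((a == d) = false) *
  ((b == c) = false) * ((b == d) = false) * ((c == d) = false) *
  ((b == a) = false) * ((c == a) = false) * ((d == a) = false) *
  ((c == b) = false) * ((d == b) = false) * ((d == c) = false).
Proof.
rewrite /= !inE !negb_or -!andbA andbT.
case/and5P=> /negbTE ab /negbTE ac /negbTE ad /negbTE bc /andP[/negbTE bd /negbTE cd].
rewrite (eq_sym b a) (eq_sym c a) (eq_sym d a) (eq_sym c b) (eq_sym d b) (eq_sym d c).
by rewrite ab ac ad bc bd cd.
Qed.

Lemma count_sum (T : Type) (r : seq T) (a : pred T) : count a r = \sum_(z <- r) a z.
Proof. by elim: r => [|z r IH]; rewrite ?big_nil ?big_cons //= IH. Qed.

Lemma count_sum_nth (T : Type) x0 (r : seq T) (a : pred T) :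
  count a r = \sum_(i < size r) a (nth x0 r i).
Proof. by elim: r => [|z r IH]; rewrite ?big_ord0 // big_ord_recl /= IH. Qed.

Lemma card_nth (T : Type) x0 (r : seq T) (a : pred T) :
  #|[set i : 'I_(size r) | a (nth x0 r i)]| = count a r.
Proof.
rewrite (count_sum_nth x0) -sum1_card big_mkcond /=.
by apply: eq_bigr => i _; rewrite inE; case: (a _).
Qed.

Lemma exists_exit_step (T : Type) (P : pred T) x0 (r : seq T) :
  P (nth x0 r 0) -> ~~ P (last x0 r) ->
  exists t, [/\ t.+1 < size r, P (nth x0 r t) & ~~ P (nth x0 r t.+1)].
Proof.
elim: r x0 => [|z r IH] x0 /=; first by move=> ->.
case: r IH => [|w r] IH /=; first by move=> ->.
case: (boolP (P w)) => [Pw _ /(IH x0 Pw)[t [? ? ?]] | Pw Pz _]; first by exists t.+1.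
by exists 0.
Qed.

Section Cuts.
Variable V : finType.
Implicit Types (G : seq (V * V)) (A X Y Z : {set V}) (e : V * V) (s : V).

Definition crosses X e := (e.1 \in X) != (e.2 \in X).
Definition cut G X := count (crosses X) G.
Definition between G X Y :=
  count (fun e => (e.1 \in X) && (e.2 \in Y) || (e.1 \in Y) && (e.2 \in X)) G.
Definition deg_into G s X := count (fun e => incident s e && (other s e \in X)) G.
Definition splits A X := (A :&: X != set0) && (A :\: X != set0).

Lemma splitsI A X u w : u \in A -> w \in A -> u \in X -> w \notin X -> splits A X.
Proof.
move=> uA wA uX wX; apply/andP; split; apply/set0Pn; [exists u | exists w].
  by rewrite inE uA uX.
by rewrite inE wA wX.
Qed.

Lemma splitsU1 A X v : v \notin A -> splits A X -> splits A (v |: X).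
Proof.
move=> vA /andP[/set0Pn[u /setIP[uA uX]] /set0Pn[w /setDP[wA wX]]].
apply: (splitsI uA wA); rewrite !inE ?uX ?orbT // negb_or wX andbT.
by apply: contraNneq vA => <-.
Qed.

Lemma cut_setC G X : cut G (~: X) = cut G X.
Proof. by apply: eq_count => e; rewrite /crosses !inE; do 2 case: (_ \in X). Qed.

Lemma deg_into_setC G s X : deg_into G s X + deg_into G s (~: X) = deg G s.
Proof.
rewrite /deg_into /deg !count_sum -big_split; apply: eq_bigr => e _ /=.
by rewrite inE; case: (incident _ _); case: (_ \in X).
Qed.

Lemma cut_setU1 G s X : (forall e, e \in G -> e.1 != e.2) -> s \notin X ->
  cut G (s |: X) + deg_into G s X = cut G X + deg_into G s (~: X).
Proof.
move=> loopless sX; rewrite /cut /deg_into !count_sum -!big_split /=.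
apply: eq_big_seq => -[u v] /loopless /=.
rewrite /crosses /incident /other /= !inE.
case: (eqVneq u s) => [->|us] uv.
  by rewrite (negbTE sX) (eq_sym v s) (negbTE uv); case: (v \in X).
case: (eqVneq v s) => [->|vs] /=; first by rewrite (negbTE sX); case: (u \in X).
by case: (u \in X); case: (v \in X).
Qed.

Lemma cut_setID G X Y : cut G (X :&: Y) + cut G (X :\: Y) =
  cut G X + (between G (X :&: Y) (X :\: Y)).*2.
Proof.
rewrite /cut /between -addnn !count_sum -!big_split /=; apply: eq_bigr => -[u v] _.
by rewrite /crosses /= !inE; case: (u \in X); case: (u \in Y); case: (v \in X); case: (v \in Y).
Qed.

Lemma cut_uncross3 G X Y Z :
  cut G (X :&: Y :&: Z) + cut G (X :\: Y :\: Z) + cut G (Y :\: X :\: Z) +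
  cut G (Z :\: X :\: Y) <= cut G X + cut G Y + cut G Z.
Proof.
rewrite /cut !count_sum -!big_split /=; apply: leq_sum => -[u v] _.
rewrite /crosses /= !inE.
by case: (u \in X); case: (u \in Y); case: (u \in Z); case: (v \in X); case: (v \in Y);
  case: (v \in Z).
Qed.

Lemma cut_uncross_at G s X Y : (forall e, e \in G -> e.1 != e.2) ->
  s \notin X -> s \notin Y ->
  cut G (X :&: Y) + cut G (X :\: Y) + cut G (Y :\: X) + cut G (~: (s |: (X :|: Y))) +
  deg_into G s X + deg_into G s Y + deg_into G s (X :&: Y) <=
  (cut G X).*2 + (cut G Y).*2 + deg_into G s (~: (X :|: Y)).
Proof.
move=> loopless sX sY; rewrite /cut /deg_into -!addnn !count_sum -!big_split /=.
rewrite big_seq [X in _ <= X]big_seq; apply: leq_sum => -[u v] /loopless /=.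
rewrite /crosses /incident /other /= !inE.
case: (eqVneq u s) => [->|us] uv.
  rewrite (negbTE sX) (negbTE sY) (eq_sym v s) (negbTE uv) /=.
  by case: (v \in X); case: (v \in Y).
case: (eqVneq v s) => [->|vs] /=.
  by rewrite (negbTE sX) (negbTE sY); case: (u \in X); case: (u \in Y).
by case: (u \in X); case: (u \in Y); case: (v \in X); case: (v \in Y).
Qed.
End Cuts.

Section EasyMenger.
Variables (V : finType) (G : seq (V * V)) (x y : V).

Lemma is_path_crosses p (X : {set V}) : is_path G x y p -> x \in X -> y \notin X ->
  exists2 c : 'I_(size G), val c \in p & crosses X (nth (x, x) G c).
Proof.
case=> vs [size_vs vs0 vs_last _ vs_edges] xX yX.
have [t [t_lt vt_in vt1_out]] :
    exists t, [/\ t.+1 < size vs, nth x vs t \in X & nth x vs t.+1 \notin X].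
  by apply: exists_exit_step; rewrite ?vs0 ?vs_last.
have t_lt_p : t < size p by rewrite -ltnS -size_vs.
have [c_lt c_joins] := vs_edges t t_lt_p.
exists (Ordinal c_lt); first exact: mem_nth.
move: c_joins vt_in vt1_out; rewrite /joins /crosses /=.
by case/orP=> /andP[/eqP-> /eqP->]; do 2 case: (_ \in X).
Qed.

Lemma lambda_ge_cut k (X : {set V}) : lambda_ge G x y k -> x \in X -> y \notin X -> k <= cut G X.
Proof.
case=> ps [size_ps ps_paths ps_disj] xX yX.
have /fin_all_exists2[h h_on h_crosses] : forall t : 'I_(size ps),
    exists2 c : 'I_(size G), val c \in nth [::] ps t & crosses X (nth (x, x) G c).
  by move=> t; apply: is_path_crosses xX yX; apply/ps_paths/mem_nth.
have h_inj : injective h.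
  move=> t1 t2 h12; apply/eqP/negPn/negP => t12.
  by have := ps_disj _ _ (ltn_ord t1) (ltn_ord t2) t12 _ (h_on t1); rewrite h12 h_on.
rewrite -size_ps -[size ps]card_ord -cardsT -(card_imset _ h_inj) /cut -(card_nth (x, x)).
by apply/subset_leq_card/subsetP => _ /imsetP[t _ ->]; rewrite inE.
Qed.
End EasyMenger.

Lemma joins_nth_inj (T : finType) (vs : seq T) (e : T * T) x0 t r : uniq vs ->
  t.+1 < size vs -> r.+1 < size vs ->
  joins e (nth x0 vs t) (nth x0 vs t.+1) -> joins e (nth x0 vs r) (nth x0 vs r.+1) ->
  t = r.
Proof.
move=> vs_uniq t_lt r_lt.
have nthI i j : i < size vs -> j < size vs -> nth x0 vs i = nth x0 vs j -> i = j.
  by move=> i_lt j_lt /eqP; rewrite nth_uniq // => /eqP.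
have t_lt' := ltnW t_lt; have r_lt' := ltnW r_lt.
rewrite /joins => /orP[]/andP[/eqP e1 /eqP e2] /orP[]/andP[/eqP e3 /eqP e4].
- by apply: nthI; rewrite // -e1 e3.
- have : t = r.+1 by apply: nthI; rewrite // -e1 e4.
  have : t.+1 = r by apply: nthI; rewrite // -e2 e3.
  lia.
- have : t = r.+1 by apply: nthI; rewrite // -e1 e4.
  have : t.+1 = r by apply: nthI; rewrite // -e2 e3.
  lia.
- by apply: nthI; rewrite // -e1 e3.
Qed.

Section Flows.
Variables (V : finType) (G : seq (V * V)) (x y : V).
Local Notation m := (size G).
Local Notation E e := (nth (x, x) G e).
Local Open Scope ring_scope.

Definition incidence (e : 'I_m) (u : V) : int := ((E e).1 == u)%:R - ((E e).2 == u)%:R.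
Definition outflow (f : 'I_m -> int) (u : V) : int := \sum_(e < m) f e * incidence e u.
Definition unit_flow (f : 'I_m -> int) (k : nat) :=
  [/\ forall e, -1 <= f e <= 1, outflow f x = k%:R &
      forall u, u != x -> u != y -> outflow f u = 0].

Lemma sum_eqb (a : V) (X : {set V}) : \sum_(u in X) ((a == u)%:R : int) = (a \in X)%:R.
Proof.
case: (boolP (a \in X)) => aX; last first.
  by rewrite big1 // => u uX; case: eqP => // au; rewrite au uX in aX.
rewrite (bigD1 a) //= eqxx big1 ?addr0 // => u /andP[_ ua].
by rewrite eq_sym (negbTE ua).
Qed.

Lemma outflowD f g u : outflow (fun e => f e + g e) u = outflow f u + outflow g u.
Proof. by rewrite /outflow -big_split; apply: eq_bigr => e _; rewrite mulrDl. Qed.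

Lemma outflowB f g u : outflow (fun e => f e - g e) u = outflow f u - outflow g u.
Proof. by rewrite /outflow -sumrB; apply: eq_bigr => e _; rewrite mulrBl. Qed.

Lemma unit_flow_across f k (X : {set V}) : unit_flow f k -> x \in X -> y \notin X ->
  \sum_(e < m) f e * (((E e).1 \in X)%:R - ((E e).2 \in X)%:R) = k%:R.
Proof.
case=> _ f_x f_cons xX yX.
transitivity (\sum_(u in X) outflow f u).
  rewrite /outflow exchange_big /=; apply: eq_bigr => e _.
  by rewrite -mulr_sumr sumrB !sum_eqb.
rewrite (bigD1 x) //= big1 ?addr0 // => u /andP[uX ux].
by apply: f_cons ux _; apply: contraNneq yX => <-.
Qed.

Definition orient (e : 'I_m) (u : V) : int := if (E e).1 == u then 1 else -1.
Definition path_flow (vs : seq V) (p : seq nat) (e : 'I_m) : int :=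
  \sum_(t < size p) (nth 0%N p t == val e)%:R * orient e (nth x vs t).

Lemma path_flow_off vs p e : val e \notin p -> path_flow vs p e = 0.
Proof.
move=> ep; rewrite /path_flow big1 // => t _.
by case: eqP => [pt|]; [rewrite -pt mem_nth in ep | rewrite mul0r].
Qed.

Lemma orient_incidence (e : 'I_m) (a b u : V) : joins (E e) a b -> a != b ->
  orient e a * incidence e u = (a == u)%:R - (b == u)%:R.
Proof.
rewrite /orient /incidence /joins => /orP[]/andP[/eqP-> /eqP->] ab; first by rewrite eqxx mul1r.
by rewrite eq_sym (negbTE ab) mulN1r opprB.
Qed.

Section ArcPaths.
Variable arc : 'I_m -> V -> V -> bool.
Hypothesis arc_joins : forall e u v, arc e u v -> joins (E e) u v.

Definition arc_rel : rel V := fun u v => [exists e, arc e u v].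

Definition arc_path (vs : seq V) (p : seq nat) :=
  [/\ size vs = (size p).+1, nth x vs 0 = x, last x vs = y, uniq vs &
      forall t, (t < size p)%N -> exists e : 'I_m,
        nth 0%N p t = val e /\ arc e (nth x vs t) (nth x vs t.+1)].

Lemma connect_arc_path : connect arc_rel x y -> exists vs p, arc_path vs p.
Proof.
case/connectP=> q /shortenP[q' q'_path q'_uniq _] y_last.
pose pick_arc u v := if [pick e | arc e u v] is Some e then val e else 0%N.
exists (x :: q'), (pairmap pick_arc x q'); split; rewrite ?size_pairmap //= -?y_last //.
move=> t t_lt; rewrite (nth_pairmap x 0%N _ t_lt) /pick_arc.
move/(pathP x): q'_path => /(_ t t_lt) /existsP[e arc_e].
by case: pickP => [e' arc_e'|/(_ e)]; [exists e' | rewrite arc_e].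
Qed.

Lemma arc_path_is_path vs p : arc_path vs p -> is_path G x y p.
Proof.
case=> size_vs vs0 vs_last vs_uniq vs_arcs; exists vs; split=> // t t_lt.
have [e [pt arc_e]] := vs_arcs t t_lt.
by rewrite pt; split; [exact: ltn_ord | exact: arc_joins].
Qed.

Lemma arc_path_step vs p t : arc_path vs p -> (t < size p)%N ->
  nth x vs t != nth x vs t.+1.
Proof.
case=> size_vs _ _ vs_uniq _ t_lt.
by rewrite nth_uniq ?size_vs ?ltnS ?(ltnW t_lt) //; apply/eqP; lia.
Qed.

Lemma path_flow_on vs p e : arc_path vs p -> val e \in p -> exists t,
  [/\ nth x vs t != nth x vs t.+1, arc e (nth x vs t) (nth x vs t.+1) &
      path_flow vs p e = orient e (nth x vs t)].
Proof.
move=> pth ep; have t_lt : (index (val e) p < size p)%N by rewrite index_mem.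
exists (index (val e) p); have [size_vs _ _ vs_uniq vs_arcs] := pth.
have arc_at t : (t < size p)%N -> nth 0%N p t = val e ->
    arc e (nth x vs t) (nth x vs t.+1).
  move=> tp pt; have [e' [pt' arc_e']] := vs_arcs t tp.
  by have /val_inj <- : val e' = val e by rewrite -pt'.
have arc_t := arc_at _ t_lt (nth_index 0%N ep).
split; [exact: (arc_path_step pth t_lt) | exact: arc_t |].
rewrite /path_flow (bigD1 (Ordinal t_lt)) //= nth_index // eqxx mul1r.
rewrite big1 ?addr0 // => t' t't; case: eqP => [pt'|]; last by rewrite mul0r.
case/eqP: t't; apply: val_inj => /=.
apply: (joins_nth_inj vs_uniq _ _ (arc_joins (arc_at _ (ltn_ord t') pt')) (arc_joins arc_t)).
  by rewrite size_vs ltnS.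
by rewrite size_vs ltnS.
Qed.

Lemma outflow_path_flow vs p u : arc_path vs p ->
  outflow (path_flow vs p) u = (x == u)%:R - (y == u)%:R.
Proof.
move=> pth; have [size_vs vs0 vs_last _ vs_arcs] := pth.
rewrite /outflow /path_flow; under eq_bigr do rewrite mulr_suml.
rewrite exchange_big /=.
under eq_bigr => t _.
  have [e [pt arc_e]] := vs_arcs t (ltn_ord t).
  rewrite (bigD1 e) //= pt eqxx mul1r big1 ?addr0; last first.
    by move=> e' e'e; case: eqP => [/val_inj e'E|]; [rewrite e'E eqxx in e'e | rewrite !mul0r].
  rewrite (orient_incidence u (arc_joins arc_e) (arc_path_step pth (ltn_ord t))).
  over.
pose F t : int := (nth x vs t == u)%:R.
transitivity (F 0%N - F (size p)).
  rewrite -opprB -(telescope_sumr F (leq0n _)) big_mkord -sumrN.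
  by apply: eq_bigr => t _; rewrite opprB.
by rewrite /F vs0 -[size p]/((size p).+1.-1) -size_vs nth_last vs_last.
Qed.
End ArcPaths.

Definition residual (f : 'I_m -> int) (e : 'I_m) (u v : V) :=
  ((E e).1 == u) && ((E e).2 == v) && (f e != 1) ||
  ((E e).2 == u) && ((E e).1 == v) && (f e != -1).
Definition flow_arc (f : 'I_m -> int) (e : 'I_m) (u v : V) :=
  ((E e).1 == u) && ((E e).2 == v) && (f e == 1) ||
  ((E e).2 == u) && ((E e).1 == v) && (f e == -1).

Lemma residual_joins f e u v : residual f e u v -> joins (E e) u v.
Proof. by case/orP=> /andP[/andP[/eqP <- /eqP <-] _]; rewrite /joins !eqxx ?orbT. Qed.

Lemma flow_arc_joins f e u v : flow_arc f e u v -> joins (E e) u v.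
Proof. by case/orP=> /andP[/andP[/eqP <- /eqP <-] _]; rewrite /joins !eqxx ?orbT. Qed.

Lemma unit_flow0 : unit_flow (fun=> 0) 0.
Proof. by split=> [e | | u _ _]; rewrite /outflow ?big1 // => e _; rewrite mul0r. Qed.

Lemma unit_flow_augment f k vs p : x != y -> unit_flow f k ->
  arc_path (residual f) vs p -> unit_flow (fun e => f e + path_flow vs p e) k.+1.
Proof.
move=> xy [f_cap f_x f_cons] pth; split.
- move=> e; case: (boolP (val e \in p)) => ep; last by rewrite path_flow_off ?addr0.
  have [t [step arc_e ->]] := path_flow_on (@residual_joins f) pth ep.
  move: arc_e step (f_cap e); rewrite /residual /orient.
  case/orP=> /andP[/andP[/eqP e1 /eqP e2] fe] step cap.
    by rewrite e1 eqxx; lia.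
  by rewrite e2 eq_sym (negbTE step); lia.
- rewrite outflowD f_x (outflow_path_flow (@residual_joins f) _ pth) eqxx.
  by rewrite eq_sym (negbTE xy) subr0 natr1.
- move=> u ux uy; rewrite outflowD f_cons // (outflow_path_flow (@residual_joins f) _ pth).
  by rewrite (eq_sym x u) (eq_sym y u) (negbTE ux) (negbTE uy) add0r subrr.
Qed.

Lemma cut_residual_closed f k (X : {set V}) : unit_flow f k -> x \in X -> y \notin X ->
  (forall e u v, residual f e u v -> u \in X -> v \in X) -> cut G X = k.
Proof.
move=> fk xX yX X_closed; have [f_cap _ _] := fk.
suff : (cut G X)%:R = k%:R :> int by move/eqP; rewrite eqr_nat => /eqP.
rewrite -(unit_flow_across fk xX yX) /cut (count_sum_nth (x, x)) natr_sum.
apply: eq_bigr => e _; rewrite /crosses.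
case: (boolP ((E e).1 \in X)) => e1X; case: (boolP ((E e).2 \in X)) => e2X /=;
  rewrite ?subrr ?mulr0 //.
- have : ~~ residual f e (E e).1 (E e).2 by apply: contra e2X => /X_closed; apply.
  by rewrite /residual !eqxx /= negb_or => /andP[/negPn/eqP-> _]; rewrite subr0 mulr1.
- have : ~~ residual f e (E e).2 (E e).1 by apply: contra e1X => /X_closed; apply.
  by rewrite /residual !eqxx /= negb_or => /andP[_ /negPn/eqP->]; rewrite sub0r mulrNN mulr1.
Qed.

Lemma unit_flow_or_cut k : x != y -> (exists f, unit_flow f k) \/
  exists X : {set V}, [/\ x \in X, y \notin X & (cut G X < k)%N].
Proof.
move=> xy; elim: k => [|k [[f fk]|[X [xX yX cutX]]]].
- by left; exists (fun=> 0); exact: unit_flow0.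
- case: (boolP (connect (arc_rel (residual f)) x y)) => [/connect_arc_path[vs [p pth]]|no_path].
    by left; exists (fun e => f e + path_flow vs p e); exact: unit_flow_augment.
  right; exists [set u | connect (arc_rel (residual f)) x u].
  have xX : x \in [set u | connect (arc_rel (residual f)) x u] by rewrite inE connect0.
  rewrite xX inE no_path (cut_residual_closed fk xX) //; first by rewrite inE.
  move=> e u v arc_e; rewrite !inE => xu; apply: connect_trans xu (connect1 _).
  by apply/existsP; exists e.
- by right; exists X; split=> //; exact: leqW.
Qed.

Lemma flow_arc_connect f k : unit_flow f k.+1 -> connect (arc_rel (flow_arc f)) x y.
Proof.
move=> fk; have [f_cap _ _] := fk; apply/negPn/negP => no_path.
set X := [set u | connect (arc_rel (flow_arc f)) x u].
have xX : x \in X by rewrite inE connect0.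
have yX : y \notin X by rewrite inE.
have X_closed e u v : flow_arc f e u v -> u \in X -> v \in X.
  move=> arc_e; rewrite !inE => xu; apply: connect_trans xu (connect1 _).
  by apply/existsP; exists e.
suff : k.+1%:R <= 0 :> int by rewrite lern0.
rewrite -(unit_flow_across fk xX yX); apply: sumr_le0 => e _; move: (f_cap e).
case: (boolP ((E e).1 \in X)) => e1X; case: (boolP ((E e).2 \in X)) => e2X /=;
  rewrite ?subrr ?mulr0 //.
- have : ~~ flow_arc f e (E e).1 (E e).2 by apply: contra e2X => /X_closed; apply.
  rewrite /flow_arc !eqxx /= negb_or => /andP[fe _]; rewrite subr0 mulr1; lia.
- have : ~~ flow_arc f e (E e).2 (E e).1 by apply: contra e1X => /X_closed; apply.
  rewrite /flow_arc !eqxx /= negb_or => /andP[_ fe]; rewrite sub0r mulrN mulr1; lia.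
Qed.

Lemma flow_arc_path_flow f vs p e : arc_path (flow_arc f) vs p -> val e \in p ->
  f e = path_flow vs p e /\ f e != 0.
Proof.
move=> pth ep; have [t [step arc_e ->]] := path_flow_on (@flow_arc_joins f) pth ep.
move: arc_e step; rewrite /flow_arc /orient.
case/orP=> /andP[/andP[/eqP e1 /eqP e2] /eqP->] step; first by rewrite e1 eqxx.
by rewrite e2 eq_sym (negbTE step).
Qed.

Lemma unit_flow_sub_path f k vs p : x != y -> unit_flow f k.+1 ->
  arc_path (flow_arc f) vs p -> unit_flow (fun e => f e - path_flow vs p e) k.
Proof.
move=> xy [f_cap f_x f_cons] pth; split.
- move=> e; case: (boolP (val e \in p)) => ep.
    by rewrite -(flow_arc_path_flow pth ep).1 subrr.
  by rewrite path_flow_off ?subr0.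
- rewrite outflowB f_x (outflow_path_flow (@flow_arc_joins f) _ pth) eqxx.
  by rewrite eq_sym (negbTE xy) subr0 -natr1 addrK.
- move=> u ux uy; rewrite outflowB f_cons // (outflow_path_flow (@flow_arc_joins f) _ pth).
  by rewrite (eq_sym x u) (eq_sym y u) (negbTE ux) (negbTE uy) sub0r subrr oppr0.
Qed.

Lemma unit_flow_paths k f : x != y -> unit_flow f k -> exists ps : seq (seq nat),
  [/\ size ps = k, forall p, p \in ps -> is_path G x y p,
      forall i j, (i < size ps)%N -> (j < size ps)%N -> i != j ->
        forall e, e \in nth [::] ps i -> e \notin nth [::] ps j &
      forall p e, p \in ps -> e \in p -> exists2 e' : 'I_m, val e' = e & f e' != 0].
Proof.
move=> xy; elim: k f => [|k IH] f fk; first by exists [::]; split.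
have [vs [p pth]] := connect_arc_path (flow_arc_connect fk).
have [ps [size_ps ps_paths ps_disj ps_supp]] := IH _ (unit_flow_sub_path xy fk pth).
have on_p e : val e \in p -> f e - path_flow vs p e = 0.
  by move/(flow_arc_path_flow pth) => [<- _]; rewrite subrr.
have off_p e : val e \notin p -> f e - path_flow vs p e = f e.
  by move=> ep; rewrite path_flow_off ?subr0.
have p_ps e : e \in p -> forall q, q \in ps -> e \notin q.
  move=> ep q qps; apply/negP => eq; have [e' e'e] := ps_supp q e qps eq.
  by rewrite on_p ?e'e ?eqxx.
exists (p :: ps); split.
- by rewrite /= size_ps.
- move=> q; rewrite inE => /predU1P[->|]; last exact: ps_paths.
  exact: arc_path_is_path (@flow_arc_joins f) _ _ pth.
- move=> [|i] [|j] //= i_lt j_lt ij e.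
  + by move=> ep; apply: p_ps ep _ (mem_nth _ _).
  + by apply: contraL => ep; apply: p_ps ep _ (mem_nth _ _).
  + exact: ps_disj.
- move=> q e; rewrite inE => /predU1P[-> ep|qps eq].
    have [_ _ _ _ p_arcs] := pth.
    have ip : (index e p < size p)%N by rewrite index_mem.
    have [e' [pt _]] := p_arcs _ ip.
    exists e'; first by rewrite -pt nth_index.
    by apply: (flow_arc_path_flow pth _).2; rewrite -pt mem_nth ?index_mem.
  have [e' e'e ge'] := ps_supp q e qps eq; exists e' => //.
  by rewrite -off_p //; apply: contraTN ge' => /on_p->.
Qed.

Lemma menger k : x != y -> lambda_ge G x y k \/
  exists X : {set V}, [/\ x \in X, y \notin X & (cut G X < k)%N].
Proof.
move=> xy; case: (unit_flow_or_cut k xy) => [[f /(unit_flow_paths xy)]|]; last by right.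
by case=> ps [? ? ? _]; left; exists ps.
Qed.
End Flows.

Lemma count_liftG (V : finType) (G : seq (V * V)) (s : V) (i j : 'I_(size G))
    (a : pred (V * V)) : i != j ->
  count a (liftG G s i j) + a (nth (s, s) G i) + a (nth (s, s) G j) =
  count a G + a (other s (nth (s, s) G i), other s (nth (s, s) G j)).
Proof.
move=> ij; suff kept : count a [seq q.2 | q <- zip (iota 0 (size G)) G &
    (q.1 != i :> nat) && (q.1 != j)] + a (nth (s, s) G i) + a (nth (s, s) G j) = count a G.
  by rewrite /liftG count_cat /=; lia.
have -> : zip (iota 0 (size G)) G = [seq (k, nth (s, s) G k) | k <- iota 0 (size G)].
  by rewrite -[in X in zip _ X](mkseq_nth (s, s) G) /mkseq -[X in zip X _]map_id zip_map.
rewrite filter_map -map_comp count_map count_filter.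
rewrite (count_sum_nth 0) size_iota (count_sum_nth (s, s) G).
rewrite [in RHS](bigD1 i) //= [in RHS](bigD1 j) /=; last by rewrite eq_sym.
rewrite -addnA addnC -addnA; do 2 congr (_ + _).
rewrite [RHS]big_mkcond; apply: eq_bigr => k _; rewrite nth_iota //= add0n.
by case: (a _); case: (k != i); case: (k != j).
Qed.

Lemma set4_sorted_labelling (T : finType) (I : {set T}) (a : T) (r : rel T) :
  #|I| = 4 -> a \in I -> total r ->
  exists b c d, [/\ uniq [:: a; b; c; d], I = [set a; b; c; d] & sorted r [:: b; c; d]].
Proof.
move=> card_I aI r_total.
have perm_r : perm_eq (sort r (enum (I :\ a))) (enum (I :\ a)) by rewrite perm_sort.
have : size (sort r (enum (I :\ a))) = 3.
  by rewrite size_sort -cardE; have := cardsD1 a I; rewrite aI card_I add1n => -[].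
case E: (sort r _) => [|b [|c [|d [|? ?]]]] // _.
have mem_bcd z : (z \in [:: b; c; d]) = (z \in I :\ a).
  by rewrite -E (perm_mem perm_r) mem_enum.
exists b, c, d; split; last by rewrite -E sort_sorted.
  by rewrite cons_uniq mem_bcd !inE eqxx -E (perm_uniq perm_r) enum_uniq.
apply/setP => z; rewrite -{1}(setD1K aI) in_setU1 -mem_bcd !inE.
by case: (z == a); case: (z == b); case: (z == c); case: (z == d).
Qed.

Section FourVertexGraphs.
Variables (T : finType) (I : {set T}) (adj : T -> T -> Prop) (D : rel T).
Hypothesis card_I : #|I| = 4.
Hypothesis adjE : forall x y, x \in I -> y \in I -> adj x y <-> (x != y) && ~~ D x y.
Hypothesis D_sym : symmetric D.
Hypothesis D_compl : forall a b c d, uniq [:: a; b; c; d] ->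
  a \in I -> b \in I -> c \in I -> d \in I -> D a b -> D c d.

Lemma adj_upairE (E : seq (T * T)) :
    (forall x y, x \in I -> y \in I -> (x != y) && ~~ D x y = upair x y E) ->
  forall x y, x \in I -> y \in I -> adj x y <-> upair x y E.
Proof. by move=> DE x y xI yI; rewrite adjE // DE. Qed.

Section Labelled.
Variables a b c d : T.
Hypothesis abcd_uniq : uniq [:: a; b; c; d].
Hypothesis I_abcd : I = [set a; b; c; d].

Let neq := uniq4_eqF abcd_uniq.

Let abcd_in : [/\ a \in I, b \in I, c \in I & d \in I].
Proof. by rewrite I_abcd !inE !eqxx ?orbT. Qed.

Let D_compl_eq p q u v : uniq [:: p; q; u; v] ->
  p \in I -> q \in I -> u \in I -> v \in I -> D u v = D p q.
Proof.
move=> U pI qI uI vI.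
by apply/idP/idP; apply: D_compl; rewrite // /= !inE ?(uniq4_eqF U).
Qed.

Lemma D_table : (D b a = D a b) * (D c a = D a c) * (D d a = D a d) *
  (D c d = D a b) * (D d c = D a b) * (D b d = D a c) * (D d b = D a c) *
  (D b c = D a d) * (D c b = D a d).
Proof.
have [aI bI cI dI] := abcd_in.
have Dcd : D c d = D a b by apply: D_compl_eq; rewrite // /= !inE !neq.
have Dbd : D b d = D a c by apply: D_compl_eq; rewrite // /= !inE !neq.
have Dbc : D b c = D a d by apply: D_compl_eq; rewrite // /= !inE !neq.
by rewrite !(D_sym _ a) (D_sym d c) (D_sym d b) (D_sym c b) Dcd Dbd Dbc.
Qed.

Ltac check_pairs :=
  rewrite I_abcd => x y; rewrite !inE -!orbA => /or4P[]/eqP-> /or4P[]/eqP->;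
  rewrite /upair /= ?xpair_eqE ?eqxx ?neq ?D_table.

Lemma is_K4_abcd : ~~ D a b -> ~~ D a c -> ~~ D a d -> is_K4 I adj.
Proof.
move=> /negbTE Dab /negbTE Dac /negbTE Dad; split=> // x y xI yI; rewrite adjE //.
move: xI yI; rewrite I_abcd !inE -!orbA => /or4P[]/eqP-> /or4P[]/eqP->;
  by rewrite ?eqxx ?neq ?D_table ?Dab ?Dac ?Dad.
Qed.

Lemma is_K22_abcd : D a b -> ~~ D a c -> ~~ D a d -> is_K22 I adj.
Proof.
move=> Dab /negbTE Dac /negbTE Dad; exists a, c, b, d; split.
- by rewrite /= !inE !neq.
- by rewrite I_abcd; apply/setP => z; rewrite !inE; case: (z == a); case: (z == b);
    case: (z == c).
apply: adj_upairE; check_pairs; by rewrite ?Dab ?Dac ?Dad.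
Qed.

Lemma is_2K2_abcd : D a b -> D a c -> ~~ D a d -> is_2K2 I adj.
Proof.
move=> Dab Dac /negbTE Dad; exists a, d, b, c; split.
- by rewrite /= !inE !neq.
- by rewrite I_abcd; apply/setP => z; rewrite !inE; case: (z == a); case: (z == b);
    case: (z == c); case: (z == d).
apply: adj_upairE; check_pairs; by rewrite ?Dab ?Dac ?Dad.
Qed.
End Labelled.

Lemma nonedge_matchings_shape :
    (forall a b c d, uniq [:: a; b; c; d] -> a \in I -> b \in I -> c \in I -> d \in I ->
       ~~ [&& D a b, D a c & D a d]) ->
  is_K4 I adj \/ is_K22 I adj \/ is_2K2 I adj.
Proof.
move=> D_claw; have [a aI] : exists a, a \in I by apply/set0Pn; rewrite -card_gt0 card_I.
have r_total : total (fun u v => D a v ==> D a u) by move=> u v; case: (D a u); case: (D a v).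
have [b [c [d [U I_abcd]]]] := set4_sorted_labelling card_I aI r_total.
rewrite /=; case Dab: (D a b); case Dac: (D a c); case Dad: (D a d) => //= _.
- have [_ bI cI dI] : [/\ a \in I, b \in I, c \in I & d \in I].
    by rewrite I_abcd !inE !eqxx ?orbT.
  by have := D_claw _ _ _ _ U aI bI cI dI; rewrite Dab Dac Dad.
- by right; right; apply: (is_2K2_abcd U I_abcd); rewrite ?Dab ?Dac ?Dad.
- by right; left; apply: (is_K22_abcd U I_abcd); rewrite ?Dab ?Dac ?Dad.
- by left; apply: (is_K4_abcd U I_abcd); rewrite ?Dab ?Dac ?Dad.
Qed.

Lemma nonedge_matchings_2K2 : is_2K2 I adj -> exists a b c d,
  [/\ uniq [:: a; b; c; d], a \in I, b \in I, c \in I & d \in I] /\ D a b && D a c.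
Proof.
case=> [a [b [c [d [U I_abcd adj_abcd]]]]]; have neq := uniq4_eqF U.
have [aI bI cI dI] : [/\ a \in I, b \in I, c \in I & d \in I].
  by rewrite I_abcd !inE !eqxx ?orbT.
have nonadj x y : x \in I -> y \in I -> x != y -> ~~ upair x y [:: (a, b); (c, d)] -> D x y.
  move=> xI yI xy; apply: contraNT => Dxy.
  by rewrite -(adj_abcd x y xI yI) adjE // xy Dxy.
exists a, c, d, b; split; first by split; rewrite // /= !inE !neq.
by rewrite !nonadj // ?neq // /upair /= ?xpair_eqE ?eqxx ?neq.
Qed.
End FourVertexGraphs.

Section Lifting.
Variables (V : finType) (G : seq (V * V)) (l : nat) (s : V) (A : {set V}).
Hypothesis G_loopless : forall e, e \in G -> e.1 != e.2.
Hypothesis s_notin_A : s \notin A.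
Hypothesis lambda_A : forall x y, x \in A -> y \in A -> x != y -> lambda_ge G x y l.
Hypothesis edges_meet_A : forall e, e \in G -> (e.1 \in A) || (e.2 \in A).
Hypothesis deg_s : deg G s = 4.

Local Notation L := (lvert G s).
Implicit Types (X Y Z : {set V}) (i j k : 'I_(size G)).

Definition other_end (i : 'I_(size G)) : V := other s (nth (s, s) G i).

Definition dangerous (i j : 'I_(size G)) (X : {set V}) :=
  [&& s \notin X, other_end i \in X, other_end j \in X, splits A X & cut G X <= l.+1].

Definition blocked (i j : 'I_(size G)) := [exists X, dangerous i j X].

Lemma l_le_cut X : splits A X -> l <= cut G X.
Proof.
case/andP=> /set0Pn[u /setIP[uA uX]] /set0Pn[w /setDP[wA wX]].
have uw : u != w by apply: contraNneq wX => <-.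
exact: lambda_ge_cut (lambda_A uA wA uw) uX wX.
Qed.

Lemma other_end_in_A i : i \in L -> other_end i \in A.
Proof.
rewrite inE /other_end /incident /other.
have := edges_meet_A (mem_nth (s, s) (ltn_ord i)).
case: (nth _ _ _) => u v /= uvA; case: (eqVneq u s) => [us _|_ /eqP vs].
  by move: uvA; rewrite us (negbTE s_notin_A).
by move: uvA; rewrite vs (negbTE s_notin_A) orbF.
Qed.

Lemma other_end_neq_s i : i \in L -> other_end i != s.
Proof. by move/other_end_in_A; apply: contraTneq => ->. Qed.

Lemma card_L : #|L| = 4.
Proof. by rewrite card_nth. Qed.

Lemma deg_into_card X : deg_into G s X = #|[set i in L | other_end i \in X]|.
Proof. by rewrite /deg_into -(card_nth (s, s)); apply: eq_card => i; rewrite !inE. Qed.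

Lemma dangerous_deg_into i j X : i \in L -> j \in L -> i != j -> dangerous i j X ->
  deg_into G s X = 2.
Proof.
move=> iL jL ij /and5P[sX iX jX splitX cutX].
have : 1 < deg_into G s X.
  rewrite deg_into_card; apply/card_gt1P; exists i, j.
  by rewrite [i \in _]inE [j \in _]inE iL jL iX jX.
have := l_le_cut (splitsU1 s_notin_A splitX).
have := cut_setU1 G_loopless sX; have := deg_into_setC G s X; rewrite deg_s; lia.
Qed.

Lemma dangerous_other_endE i j X k : i \in L -> j \in L -> i != j -> dangerous i j X ->
  k \in L -> (other_end k \in X) = (k == i) || (k == j).
Proof.
move=> iL jL ij dX kL; have deg2 := dangerous_deg_into iL jL ij dX.
case/and5P: dX => _ iX jX _ _.
case: (eqVneq k i) => [->//|ki]; case: (eqVneq k j) => [->//|kj] /=.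
apply/negP => kX; suff : 2 < deg_into G s X by rewrite deg2.
rewrite deg_into_card; apply/card_gt2P; exists i, j, k.
by rewrite [i \in _]inE [j \in _]inE [k \in _]inE iL jL kL iX jX kX ij ki eq_sym kj.
Qed.

Lemma cut_liftG i j X : i \in L -> j \in L -> i != j -> s \notin X ->
  cut (liftG G s i j) X + ((other_end i \in X) && (other_end j \in X)).*2 = cut G X.
Proof.
move=> iL jL ij sX.
have crosses_end k : k \in L -> crosses X (nth (s, s) G k) = (other_end k \in X).
  rewrite inE /other_end /crosses /incident /other.
  case: (nth _ _ _) => u v /=; case: (eqVneq u s) => [->|_ /= /eqP->];
    by rewrite (negbTE sX); case: (_ \in X).
have := count_liftG s (crosses X) ij; rewrite crosses_end // crosses_end //.
rewrite -/(cut _ X) -/(cut G X) /crosses /= -/(other_end i) -/(other_end j).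
by case: (other_end i \in X); case: (other_end j \in X);
  rewrite /= ?addn0 ?addn1 ?addn2 // => -[].
Qed.

Lemma cut_liftG_lt i j X : i \in L -> j \in L -> i != j -> s \notin X -> splits A X ->
  (cut (liftG G s i j) X < l) = [&& other_end i \in X, other_end j \in X & cut G X <= l.+1].
Proof.
move=> iL jL ij sX /l_le_cut; rewrite -(cut_liftG iL jL ij sX).
case: (other_end i \in X); case: (other_end j \in X) => /=; rewrite ?addn0 ?addn2 //.
all: by move=> l_le; rewrite ltnNge l_le.
Qed.

Lemma admissibleE i j :
  admissible G s A l i j <-> [&& i \in L, j \in L, i != j & ~~ blocked i j].
Proof.
split=> [[iL jL ij lift_ok] | /and4P[iL jL ij not_blocked]].
  rewrite iL jL ij; apply/existsP => -[X /and5P[sX iX jX splitX cutX]].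
  have : cut (liftG G s i j) X < l by rewrite cut_liftG_lt // iX jX.
  case/andP: (splitX) => /set0Pn[u /setIP[uA uX]] /set0Pn[w /setDP[wA wX]].
  have uw : u != w by apply: contraNneq wX => <-.
  have us : u != s by apply: contraNneq s_notin_A => <-.
  have ws : w != s by apply: contraNneq s_notin_A => <-.
  have := lambda_ge_cut (lift_ok u w us ws uw) uX wX.
  by rewrite /tau uA wA leqNgt => /negbTE->.
split=> // u w _ _ uw; rewrite /tau.
case: (boolP ((u \in A) && (w \in A))) => [/andP[uA wA]|_]; last by exists [::]; split.
have [//|[W [uW wW cutW]]] := menger (liftG G s i j) l uw.
case/negP: not_blocked; apply/existsP.
pose X := if s \in W then ~: W else W.
have sX : s \notin X by rewrite /X; case: ifP => sW; rewrite ?inE sW.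
have cutX : cut (liftG G s i j) X < l by rewrite /X; case: ifP; rewrite ?cut_setC.
have splitX : splits A X.
  by rewrite /X; case: ifP => _; [apply: (splitsI wA uA) | apply: (splitsI uA wA)];
    rewrite ?inE ?uW ?wW.
by exists X; rewrite /dangerous sX splitX /= -cut_liftG_lt.
Qed.

Lemma blocked_sym : symmetric blocked.
Proof.
move=> i j; apply: eq_existsb => X; rewrite /dangerous.
by case: (other_end i \in X); case: (other_end j \in X).
Qed.

Lemma blocked_compl i j p q : uniq [:: i; j; p; q] ->
  i \in L -> j \in L -> p \in L -> q \in L -> blocked i j -> blocked p q.
Proof.
move=> U iL jL pL qL /existsP[X dX]; have neq := uniq4_eqF U.
have ij : i != j by rewrite neq.
have ends := dangerous_other_endE iL jL ij dX.
have deg2 := dangerous_deg_into iL jL ij dX.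
case/and5P: dX => sX iX _ _ cutX.
apply/existsP; exists (~: (s |: X)); apply/and5P; split.
- by rewrite !inE eqxx.
- by rewrite !inE negb_or (other_end_neq_s pL) ends // !neq.
- by rewrite !inE negb_or (other_end_neq_s qL) ends // !neq.
- apply: (splitsI (other_end_in_A pL) (other_end_in_A iL)); rewrite !inE ?iX ?orbT //.
  by rewrite negb_or (other_end_neq_s pL) ends // !neq.
- rewrite cut_setC; have := cut_setU1 G_loopless sX.
  by have := deg_into_setC G s X; rewrite deg_s; lia.
Qed.

Lemma blocked_claw a b c d : 4 <= l -> uniq [:: a; b; c; d] ->
  a \in L -> b \in L -> c \in L -> d \in L -> ~~ [&& blocked a b, blocked a c & blocked a d].
Proof.
move=> l_ge4 U aL bL cL dL; apply/and3P => -[/existsP[X dX] /existsP[Y dY] /existsP[Z dZ]].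
have [cut1 cut2 cut3 cut4] : [/\ l <= cut G (X :&: Y :&: Z), l <= cut G (X :\: Y :\: Z),
    l <= cut G (Y :\: X :\: Z) & l <= cut G (Z :\: X :\: Y)].
  have inX k : k \in L -> (other_end k \in X) = (k == a) || (k == b).
    by apply: dangerous_other_endE; rewrite ?(uniq4_eqF U).
  have inY k : k \in L -> (other_end k \in Y) = (k == a) || (k == c).
    by apply: dangerous_other_endE; rewrite ?(uniq4_eqF U).
  have inZ k : k \in L -> (other_end k \in Z) = (k == a) || (k == d).
    by apply: dangerous_other_endE; rewrite ?(uniq4_eqF U).
  have aA := other_end_in_A aL; have bA := other_end_in_A bL.
  have cA := other_end_in_A cL; have dA := other_end_in_A dL.
  split; apply: l_le_cut; [apply: (splitsI aA bA) | apply: (splitsI bA aA) |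
    apply: (splitsI cA aA) | apply: (splitsI dA aA)];
    by rewrite !inE ?inX ?inY ?inZ // ?eqxx ?(uniq4_eqF U).
move/and5P: dX => [_ _ _ _ cutX]; move/and5P: dY => [_ _ _ _ cutY].
move/and5P: dZ => [_ _ _ _ cutZ]; have := cut_uncross3 G X Y Z.
(* [lia] case-splits on every boolean hypothesis in the context, so drop them first. *)
move=> {U aL bL cL dL}; lia.
Qed.

Lemma blocked2_odd a b c d : uniq [:: a; b; c; d] ->
  a \in L -> b \in L -> c \in L -> d \in L -> blocked a b -> blocked a c -> odd l.
Proof.
move=> U aL bL cL dL /existsP[X dX] /existsP[Y dY].
have inX k : k \in L -> (other_end k \in X) = (k == a) || (k == b).
  by apply: dangerous_other_endE; rewrite ?(uniq4_eqF U).
have inY k : k \in L -> (other_end k \in Y) = (k == a) || (k == c).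
  by apply: dangerous_other_endE; rewrite ?(uniq4_eqF U).
have degX : deg_into G s X = 2 by apply: dangerous_deg_into dX; rewrite ?(uniq4_eqF U).
have degY : deg_into G s Y = 2 by apply: dangerous_deg_into dY; rewrite ?(uniq4_eqF U).
have [cut1 cut2 cut3 cut4] : [/\ l <= cut G (X :&: Y), l <= cut G (X :\: Y),
    l <= cut G (Y :\: X) & l <= cut G (~: (s |: (X :|: Y)))].
  have aA := other_end_in_A aL; have bA := other_end_in_A bL.
  have cA := other_end_in_A cL; have dA := other_end_in_A dL.
  split; apply: l_le_cut; [apply: (splitsI aA bA) | apply: (splitsI bA aA) |
    apply: (splitsI cA aA) | apply: (splitsI dA aA)];
    rewrite !inE ?inX ?inY // ?eqxx ?(uniq4_eqF U) ?orbT //=.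
  by rewrite (negbTE (other_end_neq_s dL)).
have degXY : 0 < deg_into G s (X :&: Y).
  rewrite deg_into_card; apply/card_gt0P; exists a.
  by rewrite [a \in _]inE aL !inE inX ?inY // eqxx.
have degC : deg_into G s (~: (X :|: Y)) <= 1.
  have : 2 < deg_into G s (X :|: Y).
    rewrite deg_into_card; apply/card_gt2P; exists a, b, c.
    by rewrite [a \in _]inE [b \in _]inE [c \in _]inE aL bL cL !inE ?inX ?inY // !eqxx
      ?(uniq4_eqF U).
  by have := deg_into_setC G s (X :|: Y); rewrite deg_s; lia.
move/and5P: dX => [sX _ _ _ cutX]; move/and5P: dY => [sY _ _ _ cutY].
have := cut_uncross_at G_loopless sX sY; have := cut_setID G X Y.
rewrite degX degY; set t := between _ _ _ => split_eq uncross.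
have -> : l = t.*2.+1 by move=> {U aL bL cL dL sX sY}; lia.
by rewrite /= odd_double.
Qed.
End Lifting.

Theorem proposition4p4 (V : finType) (G : seq (V * V)) (l : nat) (s : V)
    (A : {set V}) :
  (forall e, e \in G -> e.1 != e.2) ->
  4 <= l ->
  A \proper [set: V] ->
  s \notin A ->
  (forall x y, x \in A -> y \in A -> x != y -> lambda_ge G x y l) ->
  (forall e, e \in G -> (e.1 \in A) || (e.2 \in A)) ->
  deg G s = 4 ->
  [/\ is_K4 (lvert G s) (admissible G s A l)
      \/ is_K22 (lvert G s) (admissible G s A l)
      \/ is_2K2 (lvert G s) (admissible G s A l)
    & is_2K2 (lvert G s) (admissible G s A l) -> odd l].
Proof.
(* [A \proper [set: V]] already follows from [s \notin A]. *)
move=> loopless l_ge4 _ s_notin_A lambda_A edges_meet_A deg_s.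
have adjE i j : i \in lvert G s -> j \in lvert G s ->
    admissible G s A l i j <-> (i != j) && ~~ blocked l s A i j.
  by move=> iL jL; rewrite admissibleE // iL jL.
split.
  apply: (nonedge_matchings_shape (card_L deg_s) adjE (@blocked_sym _ _ l s A)).
    by move=> a b c d; apply: blocked_compl.
  by move=> a b c d; apply: blocked_claw.
case/(nonedge_matchings_2K2 adjE) => a [b [c [d [[U aL bL cL dL] Dabc]]]].
by case/andP: Dabc; apply: blocked2_odd U aL bL cL dL.
Qed.
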